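(* Let $D'$ be a digraph and $T$ a 1-optimal out-branching of $D'$. For each $v\in V(T)$ define the bag $X_v=\{u,v\}\cup \mathrm{BrSucc}(T)\cup\mathrm{Leaf}(T)\cup\mathrm{Head}(\mathrm{Back}_{D'}^T(v))$, where $u$ is the in-neighbor of $v$ in $T$ (and $u$ is omitted if $v$ is the root of $T$). Then $(\{X_v: v\in V(T)\}, T)$, with $T$ regarded as an undirected tree, is a tree decomposition of $D'$ (with arc directions ignored).
   Context: An out-tree is a subgraph that is a tree (ignoring directions) with one vertex (the root) of in-degree $0$ and all others of in-degree $1$; an out-branching is a spanning out-tree. $\mathrm{Leaf}(T)$ is the set of vertices of out-degree $0$ in $T$; a branch vertex has out-degree at least $2$ in $T$; $\mathrm{BrSucc}(T)$ is the set of vertices whose in-neighbor in $T$ is a branch vertex. Write $u\preceq_T v$ if $v$ is reachable from $u$ in $T$, $u\prec_T v$ if also $u\ne v$. $\mathrm{Back}_{D'}^T(z)=\{(a,b)\in A(D'): b\prec_T z\preceq_T a\}$, and $\mathrm{Head}(B)$ is the set of heads of arcs of $B$. For an arc $(a,b)\in A(D')\setminus A(T)$ with $b$ not the root, the 1-change for $(a,b)$ replaces the arc of $T$ entering $b$ by $(a,b)$. $T$ is 1-optimal if no 1-change yields an out-branching with more leaves. A tree decomposition of a digraph is a pair consisting of a tree $U$ and bags $X_i\subseteq V$ ($i\in V(U)$) covering all vertices, such that each arc has both endpoints in some bag and, for each vertex, the nodes whose bags contain it form a subtree of $U$. *)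

From mathcomp Require Import all_boot.
Set Implicit Arguments. Unset Strict Implicit. Unset Printing Implicit Defensive.

Section Defs.
Variable V : finType.

(* T (arc relation) is an out-branching of D: every arc of T is an arc of D,
   some root r has in-degree 0, all other vertices in-degree 1, and every
   vertex is reachable from r in T (hence T is a spanning out-tree). *)
Definition out_branching (D T : rel V) : Prop :=
  subrel T D /\
  exists r : V,
    (forall v, #|[set u | T u v]| = (v != r) :> nat) /\
    (forall v, connect T r v).

Definition Leaf (T : rel V) : {set V} := [set x | #|[set y | T x y]| == 0].

Definition BrSucc (T : rel V) : {set V} :=
  [set x | [exists p, T p x && (2 <= #|[set y | T p y]|)]].

Definition preceq (T : rel V) (u v : V) : bool := connect T u v.
Definition prec (T : rel V) (u v : V) : bool := connect T u v && (u != v).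

Definition Back (D T : rel V) (z : V) : {set V * V} :=
  [set e | D e.1 e.2 && prec T e.2 z && preceq T z e.1].

Definition Head (B : {set V * V}) : {set V} := [set e.2 | e in B].

(* The 1-change for the arc (a,b): replace the arc of T entering b by (a,b). *)
Definition one_change (T : rel V) (a b : V) : rel V :=
  fun x y => (T x y && (y != b)) || ((x == a) && (y == b)).

(* b is not the root: b has an in-neighbour in T *)
Definition one_optimal (D T : rel V) : Prop :=
  out_branching D T /\
  forall a b : V, D a b -> ~~ T a b -> [exists u, T u b] ->
    out_branching D (one_change T a b) ->
    #|Leaf (one_change T a b)| <= #|Leaf T|.

(* Bag X_v = {u,v} u BrSucc(T) u Leaf(T) u Head(Back(v)), u = in-neighbour
   of v in T (omitted if v is the root, in which case [set u | T u v] = set0). *)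
Definition bag (D T : rel V) (v : V) : {set V} :=
  [set u | T u v] :|: [set v] :|: BrSucc T :|: Leaf T :|: Head (Back D T v).
End Defs.

(* Undirected graph on I given by a symmetric relation E is a tree:
   nonempty, connected, with exactly |I|-1 (unordered) edges. *)
Definition is_tree (I : finType) (E : rel I) : Prop :=
  symmetric E /\ irreflexive E /\ 0 < #|I| /\
  (forall i j, connect E i j) /\
  #|[set p : I * I | E p.1 p.2]| = 2 * (#|I| - 1).

Definition tree_decomposition (V I : finType) (D : rel V) (E : rel I)
    (X : I -> {set V}) : Prop :=
  is_tree E /\
  (forall w : V, exists i, w \in X i) /\
  (forall x y : V, D x y -> exists i, (x \in X i) && (y \in X i)) /\
  (forall w : V, forall i j, w \in X i -> w \in X j ->
     connect [rel a b | E a b && (w \in X a) && (w \in X b)] i j).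

From mathcomp Require Import all_boot.
Set Implicit Arguments. Unset Strict Implicit. Unset Printing Implicit Defensive.

(* Each non-root vertex of an out-branching T is the head of exactly one arc,
   so T has |V| - 1 arcs and, being connected, is a tree.  An arc (a,b) of D'
   lies in X_a when b is an ancestor of a (b is then in Head(Back(a))) or when
   b is in BrSucc(T), and in X_b when (a,b) is an arc of T or a is a leaf.  In
   the remaining case the 1-change for (a,b) is an out-branching in which the
   in-neighbour of b, whose only child was b, becomes a new leaf while all old
   leaves survive, contradicting 1-optimality.  A vertex of BrSucc(T) or
   Leaf(T) lies in every bag; any other vertex w lies in X_w, in the bags of
   its children and in the bags of the vertices z with w < z <= a for an arc
   (a,w), and each of those bags is joined to X_w by the tree path from w to z,
   all of whose bags contain w. *)

Local Notation undirected T := [rel x y | T x y || T y x].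
Local Notation restrict E P := [rel x y | E x y && P x && P y].

Section Paths.
Variable V : finType.
Implicit Types (e : rel V) (P : pred V).

Lemma connect_to_last e x p z :
  path e x p -> z \in x :: p -> connect e z (last x p).
Proof.
move=> + zp; case/splitPl: p / zp => p1 p2 <-; rewrite cat_path last_cat => /andP[_].
by move/path_connect; apply; rewrite mem_last.
Qed.

Lemma connect_back_closed e P x v :
  (forall y z, e y z -> P z -> P y) -> connect e x v -> P v -> P x.
Proof.
move=> closedP /connectP[p + ->]; elim: p x => [|y p IHp] x //= /andP[exy ep] Pv.
exact: closedP exy (IHp y ep Pv).
Qed.

Lemma symmetric_restrict E P : symmetric E -> symmetric (restrict E P).
Proof. by move=> symE x y; rewrite /= symE -!andbA [P x && _]andbC. Qed.

Lemma connect_restrict_path e P x p : path e x p -> all P (x :: p) ->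
  connect (restrict (undirected e) P) x (last x p).
Proof.
elim: p x => [|y p IHp] x /=; first by rewrite connect0.
case/andP=> exy ep /and3P[Px Py Pp]; apply: connect_trans (IHp y ep _); last first.
  by rewrite /= Py.
by apply: connect1; rewrite /= exy Px Py.
Qed.

End Paths.

Section OutBranching.
Variables (V : finType) (T : rel V) (r : V).
Hypothesis indegT : forall v, #|[set u | T u v]| = (v != r) :> nat.
Hypothesis reachT : forall v, connect T r v.

Lemma root_no_in_arc u : ~~ T u r.
Proof.
have /eqP := indegT r; rewrite eqxx cards_eq0 => /eqP in_r.
by apply/negP => Tur; have := in_set0 u; rewrite -in_r inE Tur.
Qed.

Lemma in_arc_head_neq_root u v : T u v -> v != r.
Proof. by apply: contraTneq => ->; exact: root_no_in_arc. Qed.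

Lemma in_neighbour_uniq u u' v : T u v -> T u' v -> u = u'.
Proof.
move=> Tuv Tu'v; have /eqP := indegT v; rewrite (in_arc_head_neq_root Tuv).
case/cards1P=> z in_v; have := in_set1 u z; have := in_set1 u' z.
by rewrite -in_v !inE Tuv Tu'v => /esym/eqP-> /esym/eqP->.
Qed.

Lemma in_neighbour_exists v : v != r -> exists u, T u v.
Proof.
move=> vr; have /eqP := indegT v; rewrite vr => /cards1P[u in_v].
by exists u; have := set11 u; rewrite -in_v inE.
Qed.

(* With a = b this also says that T has no loop. *)
Lemma out_branching_asym a b : T a b -> ~~ T b a.
Proof.
move=> Tab; apply/negP => Tba.
have ab_closed y z : T y z -> (z == a) || (z == b) -> (y == a) || (y == b).
  by move=> Tyz /orP[]/eqP zE; rewrite zE in Tyz;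
    [rewrite (in_neighbour_uniq Tyz Tba) eqxx orbT | rewrite (in_neighbour_uniq Tyz Tab) eqxx].
have := connect_back_closed (P := fun z => (z == a) || (z == b)) ab_closed (reachT a).
rewrite eqxx => /(_ isT) /orP[] /eqP rE.
  by have := root_no_in_arc b; rewrite rE Tba.
by have := root_no_in_arc a; rewrite rE Tab.
Qed.

Lemma card_arcs : #|[set p : V * V | T p.1 p.2]| = #|V|.-1.
Proof.
have heads : snd @: [set p : V * V | T p.1 p.2] = [set~ r].
  apply/setP => v; rewrite !inE; apply/imsetP/idP => [[[u w]]|vr].
    by rewrite inE /= => Tuw ->; exact: in_arc_head_neq_root Tuw.
  by have [u Tuv] := in_neighbour_exists vr; exists (u, v); rewrite ?inE.
rewrite -(cardsC1 r) -heads card_in_imset // => -[u v] [u' v'].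
rewrite !inE /= => Tuv Tu'v' vE; rewrite -vE in Tu'v' *.
by rewrite (in_neighbour_uniq Tuv Tu'v').
Qed.

Lemma card_undirected_arcs :
  #|[set p : V * V | undirected T p.1 p.2]| = 2 * (#|V| - 1).
Proof.
pose A := [set p : V * V | T p.1 p.2]; pose swap (p : V * V) := (p.2, p.1).
have swapK : involutive swap by case.
have arcsE : [set p : V * V | undirected T p.1 p.2] = A :|: swap @: A.
  apply/setP => -[x y]; rewrite !inE /=; congr (_ || _); apply/idP/imsetP.
    by move=> Tyx; exists (y, x); rewrite ?inE.
  by case=> -[u w]; rewrite inE /= => Tuw [-> ->].
have disjA : A :&: swap @: A = set0.
  apply/setP => -[x y]; rewrite !inE /=; apply/negbTE/negP => /andP[Txy /imsetP[[u w]]].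
  by rewrite inE /= => Tuw [xE yE]; move: Txy; rewrite xE yE (negbTE (out_branching_asym Tuw)).
rewrite arcsE cardsU disjA cards0 subn0 (card_imset _ (inv_inj swapK)) card_arcs.
by rewrite addnn -mul2n subn1.
Qed.

Lemma out_branching_undirected_tree : is_tree (undirected T).
Proof.
have symE : symmetric (undirected T) by move=> x y /=; rewrite orbC.
have from_root i : connect (undirected T) r i.
  by apply: connect_sub (reachT i) => x y Txy; apply: connect1; rewrite /= Txy.
split; first exact: symE.
split; first by move=> x /=; apply/norP; split; apply/negP => Txx;
  have := out_branching_asym Txx; rewrite Txx.
split; first by apply/card_gt0P; exists r.
split; last exact: card_undirected_arcs.
move=> i j; apply: connect_trans (from_root j).
by rewrite (sym_connect_sym symE); exact: from_root.
Qed.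

End OutBranching.

Lemma out_branching_tree (V : finType) (D T : rel V) :
  out_branching D T -> is_tree (undirected T).
Proof.
by case=> _ [r [indegT reachT]]; exact: out_branching_undirected_tree indegT reachT.
Qed.

Section OneChange.
Variable V : finType.
Implicit Types (D T : rel V) (a b : V).

Lemma path_one_change T a b x p :
  path T x p -> b \notin p -> path (one_change T a b) x p.
Proof.
elim: p x => [|y p IHp] x //= /andP[Txy Tp]; rewrite inE negb_or => /andP[yb bp].
by rewrite /one_change Txy eq_sym yb IHp.
Qed.

Lemma one_change_out_branching D T a b : out_branching D T -> D a b ->
  ~~ connect T b a -> out_branching D (one_change T a b).
Proof.
case=> sTD [r [indegT reachT]] Dab Nba.
have br : b != r by apply: contraNneq Nba => ->; exact: reachT.
split; first by move=> x y /orP[/andP[/sTD //]|/andP[/eqP-> /eqP->]].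
exists r; split=> [v|v].
  rewrite /one_change; have [->|vb] := eqVneq v b.
    rewrite br (_ : [set u | _] = [set a]) ?cards1 //.
    by apply/setP => u; rewrite !inE andbF andbT.
  by rewrite -(indegT v); apply: eq_card => u; rewrite !inE andbT andbF orbF.
(* A T-path from r to a vertex not below b avoids b, hence survives the change. *)
have reach_off_b w : ~~ connect T b w -> connect (one_change T a b) r w.
  move=> Nbw; case/connectP: (reachT w) => p Tp wE.
  apply/connectP; exists p => //; apply: (path_one_change _ Tp).
  apply: contraNN Nbw => bp; rewrite wE; apply: connect_to_last Tp _.
  by rewrite inE bp orbT.
have [Cbv|] := boolP (connect T b v); last exact: reach_off_b.
apply: connect_trans (reach_off_b a Nba) _.
apply: connect_trans (connect1 (_ : one_change T a b a b)) _.
  by rewrite /one_change !eqxx orbT.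
case/connectP: Cbv => p Tp vE; case: (shortenP Tp) vE => p' Tp' /andP[bp' _] _ vE.
by apply/connectP; exists p' => //; exact: path_one_change.
Qed.

Lemma LeafP T x : reflect (forall y, ~~ T x y) (x \in Leaf T).
Proof.
rewrite inE cards_eq0; apply: (iffP eqP) => [xE y|noT].
  by have := in_set0 y; rewrite -xE inE => ->.
by apply/setP => y; rewrite !inE (negbTE (noT y)).
Qed.

Lemma Leaf_one_change_proper T a b p : a \notin Leaf T -> ~~ T a b ->
  T p b -> (forall y, T p y -> y = b) -> Leaf T \proper Leaf (one_change T a b).
Proof.
move=> aNL NTab Tpb p_only_b; have pa : p != a by apply: contraNneq NTab => <-.
apply/properP; split.
  apply/subsetP => x /LeafP xL; apply/LeafP => y.
  have xa : x != a by apply: contraNneq aNL => <-; exact/LeafP.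
  by rewrite /one_change (negbTE (xL y)) (negbTE xa).
exists p; last by apply/LeafP => pL; have := pL b; rewrite Tpb.
apply/LeafP => y; rewrite /one_change (negbTE pa) /= orbF.
by apply/negP => /andP[/p_only_b ->]; rewrite eqxx.
Qed.

Lemma one_optimal_arc D T a b : one_optimal D T -> D a b -> ~~ T a b ->
  ~~ connect T b a -> (a \in Leaf T) || (b \in BrSucc T).
Proof.
case=> OB opt Dab NTab Nba; have [_ [r [indegT reachT]]] := OB.
have br : b != r by apply: contraNneq Nba => ->; exact: reachT.
have [p Tpb] := in_neighbour_exists indegT br.
have [//|aNL] := boolP (a \in Leaf T); rewrite /= inE; apply/existsP; exists p; rewrite Tpb /=.
apply: contraT => p_not_branch; exfalso.
have p_only_b y : T p y -> y = b.
  move=> Tpy; apply/eqP; apply: contraNT p_not_branch => yb.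
  have <- : #|[set y; b]| = 2 by rewrite cards2 yb.
  apply: subset_leq_card; apply/subsetP => z.
  by rewrite !inE => /orP[]/eqP->.
have in_b : [exists u, T u b] by apply/existsP; exists p.
have := opt a b Dab NTab in_b (one_change_out_branching OB Dab Nba).
apply/negP; rewrite -ltnNge; apply: proper_card.
exact: Leaf_one_change_proper aNL NTab Tpb p_only_b.
Qed.

End OneChange.

Section Bags.
Variables (V : finType) (D T : rel V).

Lemma in_bag u v : (u \in bag D T v) =
  [|| T u v, u == v, u \in BrSucc T, u \in Leaf T | u \in Head (Back D T v)].
Proof. by rewrite /bag !inE -!orbA. Qed.

Lemma bag_self v : v \in bag D T v.
Proof. by rewrite in_bag eqxx orbT. Qed.

Lemma bag_Head w v : w \in Head (Back D T v) -> w \in bag D T v.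
Proof. by rewrite in_bag => ->; rewrite !orbT. Qed.

Lemma Head_BackP w v : reflect (exists a, [/\ D a w, prec T w v & preceq T v a])
  (w \in Head (Back D T v)).
Proof.
apply: (iffP imsetP) => [[[a w']]|[a [Daw wv va]]].
  by rewrite inE /= => /andP[/andP[Daw wv] va] ->; exists a.
by exists (a, w); rewrite // inE /= Daw wv va.
Qed.

Lemma bag_cover_arc a b : irreflexive D -> one_optimal D T -> D a b ->
  exists v, (a \in bag D T v) && (b \in bag D T v).
Proof.
move=> irrD opt Dab; have ba : b != a by apply: contraTneq Dab => ->; rewrite irrD.
have [Cba|Nba] := boolP (connect T b a).
  exists a; rewrite bag_self bag_Head //.
  by apply/Head_BackP; exists a; rewrite /prec /preceq Cba ba connect0.
have [Tab|NTab] := boolP (T a b); first by exists b; rewrite !in_bag Tab eqxx orbT.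
have /orP[aL|bB] := one_optimal_arc opt Dab NTab Nba.
  by exists b; rewrite !in_bag aL eqxx !orbT.
by exists a; rewrite !in_bag bB eqxx !orbT.
Qed.

Lemma connect_bag_self w k : ~~ ((w \in BrSucc T) || (w \in Leaf T)) ->
  w \in bag D T k -> connect (restrict (undirected T) (fun z => w \in bag D T z)) w k.
Proof.
move=> wNBL wk; move: (wk); rewrite in_bag => /or4P[Twk|/eqP->|wB|/orP[wL|]].
- by apply: connect1; rewrite /= Twk wk bag_self.
- exact: connect0.
- by rewrite wB in wNBL.
- by rewrite wL orbT in wNBL.
case/Head_BackP=> a [Daw /andP[Cwk _] Cka]; case/connectP: Cwk => p Tp kE.
rewrite kE; apply: (connect_restrict_path (P := fun z => w \in bag D T z) Tp).
apply/allP => z zp.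
have [->|zw] := eqVneq z w; first exact: bag_self.
apply/bag_Head/Head_BackP; exists a; split=> //.
  by rewrite /prec (path_connect Tp zp) eq_sym.
by rewrite /preceq; apply: connect_trans Cka; rewrite kE; exact: connect_to_last Tp zp.
Qed.

Lemma bag_connected w i j : out_branching D T ->
  w \in bag D T i -> w \in bag D T j ->
  connect (restrict (undirected T) (fun z => w \in bag D T z)) i j.
Proof.
case=> _ [r [_ reachT]] wi wj.
have symR := symmetric_restrict (fun z => w \in bag D T z)
  (fun x y => orbC (T x y) (T y x)).
have [wBL|wNBL] := boolP ((w \in BrSucc T) || (w \in Leaf T)).
  have w_all k : w \in bag D T k by rewrite in_bag; case/orP: wBL => ->; rewrite !orbT.
  have from_root k : connect (restrict (undirected T) (fun z => w \in bag D T z)) r k.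
    by apply: connect_sub (reachT k) => x y Txy; apply: connect1; rewrite /= Txy !w_all.
  by apply: connect_trans (from_root j); rewrite (sym_connect_sym symR); exact: from_root.
apply: connect_trans (connect_bag_self wNBL wj).
by rewrite (sym_connect_sym symR); exact: connect_bag_self.
Qed.

End Bags.

Theorem lemma1 (V : finType) (D T : rel V) :
  irreflexive D ->
  one_optimal D T ->
  tree_decomposition D [rel x y | T x y || T y x] (bag D T).
Proof.
move=> irrD opt; have OB := opt.1.
split; first exact: out_branching_tree OB.
split; first by move=> w; exists w; exact: bag_self.
split; first by move=> x y; exact: bag_cover_arc.
by move=> w i j; exact: bag_connected.
Qed.
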